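(* Let $(t_1,s_1),(t_2,s_2)\in\mathbb{C}^\times\times\mathbb{C}^\times$ with $t_1\ne t_2$ and $s_1\neq s_2$, let $X_1=A_2(t_1,s_1)$, $X_2=A_2(t_2,s_2)$, $T=X_1+X_2$, and $\varepsilon_0=\det(X_1)+\det(X_2)-\det(X_1+X_2)$. Then for all $n\in\mathbb{N}$, $T^{2n}=(\varepsilon_0+2)^nI_2$ and $T^{2n+1}=(\varepsilon_0+2)^nT$.
   Context: $\mathbb{C}^\times=\mathbb{C}\setminus\{0\}$; $A_2(t,s)=\begin{pmatrix} t & s\\ \frac{1-t^2}{s} & -t\end{pmatrix}$; $I_2$ is the $2\times2$ identity matrix. *)

From HB Require Import structures.
From mathcomp Require Import all_boot all_algebra.
From mathcomp Require Import complex Rstruct.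
Set Implicit Arguments. Unset Strict Implicit. Unset Printing Implicit Defensive.
Import GRing.Theory Num.Theory.
Local Open Scope ring_scope.

Definition CC : numClosedFieldType := (Rdefinitions.R)[i].

Definition A2 (t s : CC) : 'M[CC]_2 :=
  \matrix_(i < 2, j < 2)
    if (i == 0) && (j == 0) then t
    else if (i == 0) then s
    else if (j == 0) then (1 - t ^+ 2) / s
    else - t.

(* A_2(t,s) has trace 0 and determinant -1, so X1 + X2 is a traceless 2 x 2
   matrix; by Cayley-Hamilton its square is the scalar -det(X1 + X2), which is
   exactly eps0 + 2.  Even and odd powers then follow from T^2 being scalar. *)

From HB Require Import structures.
From mathcomp Require Import all_boot all_algebra.
From mathcomp Require Import complex Rstruct.
From mathcomp Require Import ring.
Import GRing.Theory Num.Theory.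
Local Open Scope ring_scope.

Section TwoByTwo.
Variable R : comNzRingType.

Lemma det_mx22 (A : 'M[R]_2) : \det A = A 0 0 * A 1 1 - A 0 1 * A 1 0.
Proof.
rewrite (expand_det_row _ 0) !big_ord_recr big_ord0 /= add0r.
rewrite /cofactor !det_mx11 !mxE /= expr0 expr1.
have -> : (lift 0 0 : 'I_2) = 1 by apply/val_inj.
have -> : (lift (widen_ord (leqnSn 1) ord_max) 0 : 'I_2) = 1 by apply/val_inj.
have -> : (lift ord_max 0 : 'I_2) = 0 by apply/val_inj.
have -> : (widen_ord (leqnSn 1) ord_max : 'I_2) = 0 by apply/val_inj.
have -> : (ord_max : 'I_2) = 1 by apply/val_inj.
ring.
Qed.

Lemma trace_mx22 (A : 'M[R]_2) : \tr A = A 0 0 + A 1 1.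
Proof.
rewrite /mxtrace big_ord_recl big_ord1.
by have -> : (lift 0 0 : 'I_2) = 1 by apply/val_inj.
Qed.

Lemma ord2P (i : 'I_2) : i = 0 \/ i = 1.
Proof. by case: i => [[|[|//]] ?]; [left | right]; apply/val_inj. Qed.

Lemma sqr_mx22_traceless (A : 'M[R]_2) :
  \tr A = 0 -> A ^+ 2 = (- \det A)%:M.
Proof.
rewrite trace_mx22 det_mx22 expr2 => /eqP; rewrite addr_eq0 => /eqP A11.
apply/matrixP => i j; rewrite !mxE big_ord_recl big_ord1.
have -> : (lift 0 0 : 'I_2) = 1 by apply/val_inj.
have -> : (ord0 : 'I_2) = 0 by [].
by case: (ord2P i) => ->; case: (ord2P j) => ->; rewrite /= A11; ring.
Qed.

End TwoByTwo.

Lemma exprM2_scalar (R : comNzRingType) m (A : 'M[R]_m.+1) (c : R) n :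
  A ^+ 2 = c%:M -> A ^+ (2 * n) = (c ^+ n)%:M /\ A ^+ (2 * n + 1) = c ^+ n *: A.
Proof.
move=> sqrA; have even : A ^+ (2 * n) = (c ^+ n)%:M by rewrite exprM sqrA rmorphXn.
by rewrite exprD even expr1 -scalemx1 -scalerAl mul1r.
Qed.

Lemma trace_A2 (t s : CC) : \tr (A2 t s) = 0.
Proof. by rewrite trace_mx22 !mxE /= addrN. Qed.

Lemma det_A2 (t s : CC) : s != 0 -> \det (A2 t s) = -1.
Proof. by move=> s_neq0; rewrite det_mx22 !mxE /=; field. Qed.

Theorem mainTheorem13 (t1 s1 t2 s2 : CC)
  (ht1 : t1 != 0) (hs1 : s1 != 0) (ht2 : t2 != 0) (hs2 : s2 != 0)
  (ht : t1 != t2) (hs : s1 != s2) :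
  let X1 := A2 t1 s1 in
  let X2 := A2 t2 s2 in
  let T := X1 + X2 in
  let eps0 := \det X1 + \det X2 - \det (X1 + X2) in
  forall n : nat,
    T ^+ (2 * n) = ((eps0 + 2) ^+ n)%:M /\
    T ^+ (2 * n + 1) = (eps0 + 2) ^+ n *: T.
Proof.
move=> X1 X2 T eps0 n; apply: exprM2_scalar.
have -> : eps0 + 2 = - \det T by rewrite /eps0 !det_A2 //; ring.
by apply: sqr_mx22_traceless; rewrite mxtraceD !trace_A2 addr0.
Qed.
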